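(* Let $\alpha\in(0,1)$ and $0\le W_0\le \alpha$. Consider a monotone GAI++ rule as defined in the context, applied to $p$-values $P_1,P_2,\dots$ satisfying the independence and super-uniformity assumptions of the context. Then for every $T\in\mathbb N$, $$\mathbb E\left[\frac{V(T)+W(T)}{R(T)\vee 1}\right]\le \alpha .$$ Consequently, since $W(T)\ge 0$, $\mathrm{FDR}(T)=\mathbb E\big[V(T)/(R(T)\vee 1)\big]\le\alpha$ for all $T\in\mathbb N$.
   Context: Online testing setup: $p$-values $P_1,P_2,\dots\in[0,1]$ arrive one at a time, $P_t$ corresponding to hypothesis $H_t$. Let $\mathcal H^0\subseteq\mathbb N$ be the (fixed, unknown) set of indices of true null hypotheses. Super-uniformity: for every $t\in\mathcal H^0$, $\mathbb P(P_t\le x)\le x$ for all $x\in[0,1]$. Independence: for each $t\in\mathcal H^0$, $P_t$ is independent of $(P_s)_{s\ne t}$. Decisions are $R_t=\mathbf 1\{P_t\le\alpha_t\}$, and $\mathcal F^t=\sigma(R_1,\dots,R_t)$. A quantity indexed by $t$ is predictable if it is $\mathcal F^{t-1}$-measurable. Let $R(T)=\sum_{t=1}^T R_t$, $V(T)=\sum_{t\le T,\,t\in\mathcal H^0}R_t$. GAI++ rule: start with wealth $W(0)=W_0$ with $0\le W_0\le\alpha$. At each $t$, predictable quantities $\alpha_t\ge 0$ (test level), $\phi_t$ (penalty) and $\psi_t$ (reward) are chosen, with $\phi_t\le W(t-1)$, and the wealth is updated as $W(t)=W(t-1)-\phi_t+R_t\psi_t$; the choices are such that $W(t)\ge 0$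 for all $t$. The reward must satisfy $$\psi_t\le\min\Big\{\phi_t+b_t,\ \frac{\phi_t}{\alpha_t}+b_t-1\Big\},\qquad b_t=\begin{cases}\alpha-W_0 & \text{if } R(t-1)=0,\\ \alpha&\text{otherwise},\end{cases}$$ (with $\phi_t/\alpha_t$ interpreted as $+\infty$ if $\alpha_t=0$). The rule is monotone if $\alpha_t=f_t(R_1,\dots,R_{t-1})$ for a function $f_t:\{0,1\}^{t-1}\to[0,\infty)$ that is coordinatewise nondecreasing. *)

From HB Require Import structures.
From mathcomp Require Import all_boot all_order all_algebra.
From mathcomp Require Import all_classical all_reals all_analysis.
Set Implicit Arguments. Unset Strict Implicit. Unset Printing Implicit Defensive.
Import Order.TTheory GRing.Theory Num.Theory.
Local Open Scope classical_set_scope.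
Local Open Scope ring_scope.

Section gai.
Variables (d : measure_display) (Omega : measurableType d) (R : realType).

(* Independence of the random variable [p t] from the family (p s)_{s <> t}:
   sigma(p t) is independent of sigma(p s, s <> t); written out on the
   generating pi-system of finite-dimensional cylinder events. *)
Definition indep_from_others (P : probability Omega R) (p : nat -> Omega -> R)
  (t : nat) : Prop :=
  forall (S : seq nat) (A : set R) (B : nat -> set R),
    t \notin S -> measurable A -> (forall s, measurable (B s)) ->
    P (p t @^-1` A `&` \bigcap_(s in [set` S]) (p s @^-1` B s)) =
    (P (p t @^-1` A) * P (\bigcap_(s in [set` S]) (p s @^-1` B s)))%E.

Definition super_uniform (P : probability Omega R) (X : Omega -> R) : Prop :=
  forall x : R, 0 <= x <= 1 -> (P [set w | (X w <= x)%R] <= x%:E)%E.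

(* The rule: [alpha t h], [phi t h], [psi t h] are the test level, penalty and
   reward at time t >= 1, as functions of the history h = [:: R_1; ...; R_{t-1}]
   (predictable quantities). *)
Variables (alpha phi psi : nat -> seq bool -> R) (W0 : R) (p : nat -> Omega -> R).

Fixpoint hist (w : Omega) (t : nat) : seq bool :=
  match t with
  | 0 => [::]
  | t'.+1 => rcons (hist w t') (p t'.+1 w <= alpha t'.+1 (hist w t'))
  end.

Definition dec (w : Omega) (t : nat) : bool := nth false (hist w t) t.-1.

Definition nrej (w : Omega) (T : nat) : nat := count id (hist w T).

Definition nfalse (H0 : pred nat) (w : Omega) (T : nat) : nat :=
  \sum_(1 <= t < T.+1 | H0 t) dec w t.

Fixpoint wealth (w : Omega) (t : nat) : R :=
  match t with
  | 0 => W0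
  | t'.+1 => wealth w t' - phi t'.+1 (hist w t')
             + (dec w t'.+1)%:R * psi t'.+1 (hist w t')
  end.

End gai.

Definition bt {R : realType} (alpha W0 : R) (Rprev : nat) : R :=
  if Rprev == 0%N then alpha - W0 else alpha.

Definition hist_le (h h' : seq bool) : bool :=
  (size h == size h') && all2 (fun a b => a ==> b) h h'.

(* Write q(T) = (V(T) + W(T)) / (R(T) v 1).  Unrolling the wealth update with the
   GAI++ reward constraint gives, along every path,
     q(T) <= alpha + sum_(t <= T, t null) (R_t g_t - phi_t) / (R(T) v 1)
   for a predictable g_t with alpha_t g_t <= phi_t.  Each null term has
   nonpositive expectation.  Let the modified rule test H_t at level 1 instead of
   alpha_t; by independence and super-uniformity, a history with R_t = 1 has
   probability at most alpha_t times its probability under the modified rule,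
   and by monotonicity the modified rule rejects at least as much, so R(T) v 1
   can only grow.  Every quantity involved is a function of the first T
   decisions, so expectations reduce to finite sums over {0,1}^T. *)

From HB Require Import structures.
From mathcomp Require Import all_boot all_order all_algebra.
From mathcomp Require Import all_classical all_reals all_analysis.
From mathcomp Require Import ring lra measurable_realfun.
Import Order.TTheory GRing.Theory Num.Theory.
Local Open Scope classical_set_scope.
Local Open Scope ring_scope.

Set Implicit Arguments. Unset Strict Implicit. Unset Printing Implicit Defensive.

Section history.
Variables (R : realType) (d : measure_display) (Omega : measurableType d).
Variables (p : nat -> Omega -> R) (a : nat -> seq bool -> R).

Lemma size_hist w t : size (hist a p w t) = t.
Proof. by elim: t => //= t IH; rewrite size_rcons IH. Qed.

Definition hist_tuple w T : T.-tuple bool := Tuple (introT eqP (size_hist w T)).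

Lemma take_hist w t T : (t <= T)%N -> take t (hist a p w T) = hist a p w t.
Proof.
elim: T => [|T IH]; first by rewrite leqn0 => /eqP ->.
rewrite leq_eqVlt => /orP[/eqP ->|]; first by rewrite take_oversize // size_hist.
rewrite ltnS => tT /=; rewrite -cats1 take_cat size_hist.
move: tT; rewrite leq_eqVlt => /orP[/eqP ->|tT].
  by rewrite ltnn subnn take0 cats0.
by rewrite tT IH // ltnW.
Qed.

Lemma nth_hist w s T : (s < T)%N ->
  nth false (hist a p w T) s = (p s.+1 w <= a s.+1 (hist a p w s)).
Proof.
move=> sT; rewrite -(nth_take _ (ltnSn s)) take_hist //=.
by rewrite nth_rcons size_hist ltnn eqxx.
Qed.

Lemma decE w s : dec a p w s.+1 = (p s.+1 w <= a s.+1 (hist a p w s)).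
Proof. exact: nth_hist. Qed.

Lemma hist_eq_tests w T (h : seq bool) : size h = T ->
  hist a p w T = h <->
  (forall s, (s < T)%N -> (p s.+1 w <= a s.+1 (take s h)) = nth false h s).
Proof.
move=> sh; split; first by move=> <- s sT; rewrite nth_hist // take_hist // ltnW.
elim: T h sh => [|T IH] h sh tests; first by case: h sh tests.
case/lastP: h sh tests => [//|h b]; rewrite size_rcons => -[sh] tests /=.
have -> : hist a p w T = h.
  apply: IH => // s sT; have := tests s (ltnW sT).
  by rewrite -cats1 take_cat nth_cat sh sT.
congr rcons; have := tests T (ltnSn T).
by rewrite -cats1 take_cat nth_cat sh ltnn subnn take0 cats0.
Qed.

End history.

Section history_expectation.
Variables (R : realType) (d : measure_display) (Omega : measurableType d).
Variables (P : probability Omega R) (p : nat -> Omega -> R).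
Hypothesis mp : forall t, measurable_fun setT (p t).

Definition hist_event a T (h : seq bool) := [set w | hist a p w T = h].

Definition hist_prob a T h := fine (P (hist_event a T h)).

Definition hist_expect a T (F : seq bool -> R) :=
  \sum_(h : T.-tuple bool) F h * hist_prob a T h.

Lemma measurable_test t c (b : bool) : measurable [set w | (p t w <= c) = b].
Proof.
have mle : measurable [set w | p t w <= c].
  by have := measurable_fun_le measurableT (mp t) (measurable_cst c); rewrite setTI.
case: b; first exact: mle.
rewrite (_ : [set w | _ = false] = ~` [set w | p t w <= c]); first exact: measurableC.
by apply/seteqP; split => w /=; [move=> -> | move/negP/negbTE].
Qed.

Lemma measurable_hist_event a T h : measurable (hist_event a T h).
Proof.
have [sh|sh] := eqVneq (size h) T; last first.
  rewrite (_ : hist_event a T h = set0) //; apply/seteqP; split => w //= hw.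
  by move: sh; rewrite -hw size_hist eqxx.
rewrite (_ : hist_event a T h = \bigcap_(s : nat) (if (s < T)%N then
    [set w | (p s.+1 w <= a s.+1 (take s h)) = nth false h s] else setT)).
  by apply: bigcapT_measurable => s; case: ifP => _ //; exact: measurable_test.
apply/seteqP; split => w /=.
  by move/(hist_eq_tests _ _ _ sh) => tests s _; case: ifP => // sT; exact: tests.
by move=> tests; apply/(hist_eq_tests _ _ _ sh) => s sT; have := tests s I; rewrite sT.
Qed.

Lemma hist_indicE a T w (F : seq bool -> R) :
  F (hist a p w T) = \sum_(h : T.-tuple bool) F h * \1_(hist_event a T h) w.
Proof.
rewrite (bigD1 (hist_tuple p a w T)) //= big1 ?addr0.
  by rewrite indicE mem_set ?mulr1.
move=> h hw; rewrite indicE memNset ?mulr0 //= => hwE.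
by move/eqP: hw; apply; apply: val_inj; rewrite /= hwE.
Qed.

Lemma measurable_fun_hist a T (F : seq bool -> R) :
  measurable_fun setT (fun w => (F (hist a p w T))%:E).
Proof.
apply/measurable_EFinP; under eq_fun do rewrite hist_indicE.
apply: measurable_sum => h; apply: measurable_funM; first exact: measurable_cst.
exact/measurable_indic/measurable_hist_event.
Qed.

Lemma integral_hist a T (F : seq bool -> R) : (forall h : T.-tuple bool, 0 <= F h) ->
  (\int[P]_w (F (hist a p w T))%:E = (hist_expect a T F)%:E)%E.
Proof.
move=> F0; under eq_integral do rewrite hist_indicE -sumEFin.
rewrite ge0_integral_sum //; last first.
- by move=> h w _; rewrite lee_fin mulr_ge0.
- move=> h; apply/measurable_EFinP/measurable_funM; first exact: measurable_cst.
  exact/measurable_indic/measurable_hist_event.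
rewrite /hist_expect -sumEFin; apply: eq_bigr => h _.
rewrite (integralZl_indic _ (fun _ => hist_event a T h)) //; first last.
- exact: measurable_hist_event.
- by move=> /lt_geF; rewrite F0.
rewrite integral_indic ?setIT //; last exact: measurable_hist_event.
by rewrite EFinM fineK //; apply/fin_num_measure/measurable_hist_event.
Qed.

Lemma expectation_histE a T (X : Omega -> R) (F : seq bool -> R) :
  (forall h : T.-tuple bool, 0 <= F h) -> (forall w, X w = F (hist a p w T)) ->
  ('E_P[X] = (hist_expect a T F)%:E)%E.
Proof. by move=> F0 /funext ->; rewrite unlock integral_hist. Qed.

Lemma hist_prob_ge0 a T h : 0 <= hist_prob a T h.
Proof. exact: fine_ge0. Qed.

Lemma hist_prob_neq0 a T h : hist_prob a T h != 0 -> exists w, hist a p w T = h.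
Proof.
apply: contra_neqP => /forallNP noPath; rewrite /hist_prob.
by rewrite (_ : hist_event a T h = set0) ?measure0 //; apply/seteqP; split.
Qed.

Lemma hist_expect1 a T : hist_expect a T (fun=> 1) = 1.
Proof.
apply/EFin_inj; rewrite -integral_hist ?ler01 //.
by rewrite integral_cst //= probability_setT mul1e.
Qed.

Lemma hist_expectD a T (F G : seq bool -> R) :
  hist_expect a T (fun h => F h + G h) = hist_expect a T F + hist_expect a T G.
Proof. by rewrite -big_split; apply: eq_bigr => h _; rewrite mulrDl. Qed.

Lemma hist_expectB a T (F G : seq bool -> R) :
  hist_expect a T (fun h => F h - G h) = hist_expect a T F - hist_expect a T G.
Proof. by rewrite -sumrB; apply: eq_bigr => h _; rewrite mulrBl. Qed.

Lemma hist_expect_cst a T c : hist_expect a T (fun=> c) = c.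
Proof.
rewrite -[RHS]mulr1 -(hist_expect1 a T) /hist_expect big_distrr.
by apply: eq_bigr => h _; rewrite mul1r.
Qed.

Lemma hist_expect_sum a T (I : Type) (r : seq I) (Q : pred I) (F : I -> seq bool -> R) :
  hist_expect a T (fun h => \sum_(i <- r | Q i) F i h) =
  \sum_(i <- r | Q i) hist_expect a T (F i).
Proof.
by rewrite /hist_expect exchange_big; apply: eq_bigr => h _; rewrite big_distrl.
Qed.

Lemma ler_hist_expect a T (F G : seq bool -> R) :
  (forall w, F (hist a p w T) <= G (hist a p w T)) ->
  hist_expect a T F <= hist_expect a T G.
Proof.
move=> FG; apply: ler_sum => h _.
have [->|/hist_prob_neq0[w <-]] := eqVneq (hist_prob a T h) 0; first by rewrite !mulr0.
exact/ler_wpM2r/FG/hist_prob_ge0.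
Qed.

Lemma ler_hist_expect_rules a b T (F G : seq bool -> R) :
  (forall h : T.-tuple bool, 0 <= F h) -> (forall h : T.-tuple bool, 0 <= G h) ->
  (forall w, F (hist a p w T) <= G (hist b p w T)) ->
  hist_expect a T F <= hist_expect b T G.
Proof.
move=> F0 G0 FG; rewrite -lee_fin -integral_hist // -integral_hist //.
apply: ge0_le_integral => //; try exact: measurable_fun_hist.
- by move=> w _; rewrite lee_fin (F0 (hist_tuple p a w T)).
- by move=> w _; rewrite lee_fin.
Qed.

End history_expectation.

Lemma all2_rcons (S T : Type) (r : S -> T -> bool) x y b c : size x = size y ->
  all2 r (rcons x b) (rcons y c) = all2 r x y && r b c.
Proof.
elim: x y => [|u x IH] [|v y] //=; first by rewrite andbT.
by case=> e; rewrite IH // andbA.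
Qed.

Lemma hist_le_count x y : hist_le x y -> (count id x <= count id y)%N.
Proof.
case/andP => /eqP; elim: x y => [|u x IH] [|v y] //= [e] /andP[uv xy].
by apply: leq_add; [case: u v uv => [] [] | exact: IH].
Qed.

Definition nrej_max1 (R : realType) (h : seq bool) : R := (maxn (count id h) 1)%:R.

Lemma nrej_max1_gt0 (R : realType) h : 0 < nrej_max1 R h.
Proof. by rewrite ltr0n leq_max orbT. Qed.

Definition force_reject (R : realType) (a : nat -> seq bool -> R) t :=
  fun u x => if u == t then 1 else a u x.

Section null_rejection.
Variables (R : realType) (d : measure_display) (Omega : measurableType d).
Variables (P : probability Omega R) (p : nat -> Omega -> R).
Hypothesis mp : forall t, measurable_fun setT (p t).
Hypothesis p01 : forall t w, 0 <= p t w <= 1.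
Variable a : nat -> seq bool -> R.
Hypothesis a_ge0 : forall t h, size h = t.-1 -> 0 <= a t h.
Hypothesis a_mono : forall t h h', size h = t.-1 -> hist_le h h' -> a t h <= a t h'.
Variable s : nat.
Hypothesis s_unif : super_uniform P (p s.+1).
Hypothesis s_indep : indep_from_others P p s.+1.

Local Notation a' := (force_reject a s.+1).

Lemma hist_force_reject_prefix w u : (u <= s)%N -> hist a' p w u = hist a p w u.
Proof.
elim: u => [//|u IH] us /=; rewrite IH ?(ltnW us) //.
by rewrite /force_reject eqSS (ltn_eqF us).
Qed.

Lemma hist_le_force_reject w u : hist_le (hist a p w u) (hist a' p w u).
Proof.
elim: u => [//|u IH] /=; case/andP: (IH) => /eqP e le_hist.
rewrite /hist_le !size_rcons e eqxx /= all2_rcons // le_hist /= /force_reject.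
case: eqP => _; first by rewrite (andP (p01 u.+1 w)).2 implybT.
by apply/implyP => /le_trans; apply; apply: a_mono => //; exact: size_hist.
Qed.

Lemma nth_hist_force_reject w T : (s < T)%N -> nth false (hist a' p w T) s.
Proof.
by move=> sT; rewrite nth_hist // /force_reject eqxx (andP (p01 s.+1 w)).2.
Qed.

Section rejecting_history.
Variables (T : nat) (h : seq bool).
Hypotheses (sh : size h = T) (sT : (s < T)%N) (hs : nth false h s).

Lemma hist_event_rejectE : hist_event p a T h =
  [set w | p s.+1 w <= a s.+1 (take s h)] `&` hist_event p a' T h.
Proof.
apply/seteqP; split => w /=.
  move/(hist_eq_tests _ _ _ sh) => tests; split; first by rewrite tests.
  apply/(hist_eq_tests _ _ _ sh) => u uT; rewrite /force_reject.
  by case: eqP => [[->]|_]; [rewrite hs (andP (p01 s.+1 w)).2 | exact: tests].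
case=> test_s /(hist_eq_tests _ _ _ sh) tests; apply/(hist_eq_tests _ _ _ sh) => u uT.
by have := tests u uT; rewrite /force_reject; case: eqP => [[->]|//]; rewrite test_s hs.
Qed.

Definition test_outcome u := [set x : R | (x <= a u (take u.-1 h)) = nth false h u.-1].

Lemma hist_event_force_rejectE : hist_event p a' T h =
  \bigcap_(u in [set` [seq u <- iota 1 T | u != s.+1]]) (p u @^-1` test_outcome u).
Proof.
apply/seteqP; split => w /=.
  move/(hist_eq_tests _ _ _ sh) => tests [|v] /=; rewrite mem_filter mem_iota //.
  case/andP => vs /andP[_ vT]; have := tests v vT.
  by rewrite /force_reject (negbTE vs).
move=> outcomes; apply/(hist_eq_tests _ _ _ sh) => v vT; rewrite /force_reject.
case: eqP => [[->]|/eqP vs]; first by rewrite hs (andP (p01 s.+1 w)).2.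
by apply: (outcomes v.+1); rewrite /= mem_filter mem_iota vs add1n ltnS.
Qed.

(* Independence splits off the test at s.+1, super-uniformity bounds it. *)
Lemma hist_prob_reject_le :
  hist_prob P p a T h <= a s.+1 (take s h) * hist_prob P p a' T h.
Proof.
set c := a s.+1 (take s h).
have c_ge0 : 0 <= c by apply: a_ge0; rewrite size_take sh sT.
have mle : measurable [set x : R | x <= c].
  have := measurable_fun_le measurableT (@measurable_id _ _ setT) (measurable_cst c).
  by rewrite setTI.
have m_outcome u : measurable (test_outcome u).
  exact: (@measurable_test _ _ _ (fun _ (x : R) => x)
    (fun _ => @measurable_id _ _ setT) u).
rewrite /hist_prob hist_event_rejectE hist_event_force_rejectE.
rewrite (s_indep _ mle m_outcome); last by rewrite mem_filter eqxx.
rewrite fineM; [|exact: fin_num_measure (measurable_test mp _ _ true)|].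
- apply: ler_wpM2r; first exact: fine_ge0.
  suff : (P (p s.+1 @^-1` [set x : R | (x <= c)%R]) <= c%:E)%E.
    by move/fine_le => -> //; exact: fin_num_measure (measurable_test mp _ _ true).
  have [c1|c1] := leP c 1; first by apply: s_unif; rewrite c_ge0 c1.
  apply: le_trans (probability_le1 P (measurable_test mp _ _ true)) _.
  by rewrite lee_fin ltW.
- apply: fin_num_measure; rewrite -hist_event_force_rejectE.
  exact: measurable_hist_event.
Qed.

End rejecting_history.

(* Compare with the rule that always rejects H_{s+1}: it rejects at least as
   often, so it can only enlarge the denominator. *)
Lemma null_reject_expect_le T (G : seq bool -> R) : (s < T)%N -> (forall x, 0 <= G x) ->
  hist_expect P p a T (fun h => (nth false h s)%:R * G (take s h) / nrej_max1 R h)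
  <= hist_expect P p a T (fun h => a s.+1 (take s h) * G (take s h) / nrej_max1 R h).
Proof.
move=> sT G_ge0.
have c_ge0 (h : seq bool) : size h = T -> 0 <= a s.+1 (take s h).
  by move=> sh; apply: a_ge0; rewrite size_take sh sT.
have inv_ge0 h : 0 <= (nrej_max1 R h)^-1 by rewrite invr_ge0 ltW ?nrej_max1_gt0.
apply: (@le_trans _ _ (hist_expect P p a' T (fun h => (nth false h s)%:R *
   (a s.+1 (take s h) * G (take s h) / nrej_max1 R h)))).
  apply: ler_sum => h _; case hs: (nth false h s); last by rewrite !mul0r.
  rewrite !mul1r [X in _ <= X](_ : _ = G (take s h) / nrej_max1 R h *
    (a s.+1 (take s h) * hist_prob P p a' T h)); last by ring.
  rewrite ler_wpM2l ?mulr_ge0 //.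
  by apply: hist_prob_reject_le => //; rewrite size_tuple.
apply: (ler_hist_expect_rules P mp) => [h|h|w] /=;
  rewrite ?mulr_ge0 ?c_ge0 ?size_tuple //.
rewrite nth_hist_force_reject // mul1r.
rewrite !take_hist ?(ltnW sT) // hist_force_reject_prefix //.
rewrite -!mulrA ler_wpM2l ?a_ge0 ?size_hist // ler_wpM2l //.
rewrite lef_pV2 ?posrE ?nrej_max1_gt0 // ler_nat geq_max leq_maxr andbT.
exact: leq_trans (hist_le_count (hist_le_force_reject _ _)) (leq_maxl _ _).
Qed.

End null_rejection.

Section gai_plus_plus.
Variables (R : realType) (d : measure_display) (Omega : measurableType d).
Variables (P : probability Omega R) (p : nat -> Omega -> R) (H0 : pred nat).
Variables (alpha W0 : R) (a phi psi : nat -> seq bool -> R).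
Hypotheses (alpha_01 : 0 < alpha < 1) (W0_0alpha : 0 <= W0 <= alpha).
Hypothesis gai : forall w t, (0 < t)%N ->
  let h := hist a p w t.-1 in
  0 <= phi t h /\ phi t h <= wealth a phi psi W0 p w t.-1 /\
  0 <= wealth a phi psi W0 p w t /\
  psi t h <= phi t h + bt alpha W0 (nrej a p w t.-1) /\
  (0 < a t h -> psi t h <= phi t h / a t h + bt alpha W0 (nrej a p w t.-1) - 1).

Local Notation W w n := (wealth a phi psi W0 p w n).

(* Satisfies [psi_t + 1 <= b_t + reward_cap] and [alpha_t * reward_cap <= phi_t];
   the [+ 1] pays for a false discovery. *)
Definition reward_cap s x :=
  Num.max 0 (if 0 < a s.+1 x then phi s.+1 x / a s.+1 x else phi s.+1 x + 1).

Lemma reward_cap_mul_le w s :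
  a s.+1 (hist a p w s) * reward_cap s (hist a p w s) <= phi s.+1 (hist a p w s).
Proof.
have [phi_ge0 _] := gai w (ltn0Sn s); rewrite /= in phi_ge0.
rewrite /reward_cap; set c := a _ _; have [c_gt0|c_le0] := ltP 0 c.
  by rewrite max_r ?divr_ge0 ?(ltW c_gt0) // mulrC divfK ?gt_eqF.
by rewrite (le_trans (ler_wpM2r _ c_le0)) ?mul0r // le_max lexx.
Qed.

Definition budget w n :=
  if nrej a p w n == 0%N then W0 else alpha * (nrej a p w n)%:R.

Lemma budgetS w n :
  budget w n.+1 = budget w n + (dec a p w n.+1)%:R * bt alpha W0 (nrej a p w n).
Proof.
rewrite /budget /nrej /= -cats1 count_cat /= addn0 decE /bt.
case: (_ <= _); case: (count id _) => [|c] /=;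
  rewrite ?mulr0 ?addr0 ?mul1r ?addn0 ?addn1 //=; lra.
Qed.

Lemma budget_le w n : budget w n <= alpha * nrej_max1 R (hist a p w n).
Proof.
case/andP: alpha_01 => /ltW alpha_ge0 _; rewrite /budget /nrej_max1 /nrej.
case: eqP => [->|_]; first by rewrite mulr1; case/andP: W0_0alpha.
by rewrite ler_wpM2l // ler_nat leq_maxl.
Qed.

Lemma wealth_false_step w n :
  let D := (dec a p w n.+1)%:R in let N := (H0 n.+1)%:R in
  let x := phi n.+1 (hist a p w n) in
  W w n.+1 + N * D <=
  W w n + budget w n.+1 - budget w n + N * (D * reward_cap n (hist a p w n) - x).
Proof.
have [x_ge0 [_ [_ [psi_le psi_lt]]]] := gai w (ltn0Sn n).
rewrite /= budgetS in x_ge0 psi_le psi_lt *.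
rewrite /reward_cap; set b := bt _ _ _ in psi_le psi_lt *.
set x := phi _ _ in x_ge0 psi_le psi_lt *; set y := psi _ _ in psi_le psi_lt *.
set c := a _ _ in psi_lt *; set g := Num.max 0 _.
have g_ge0 : 0 <= g by rewrite le_max lexx.
have [c_gt0|c_le0] := ltP 0 c.
- have := psi_lt c_gt0; have : x / c <= g by rewrite le_max c_gt0 lexx orbT.
  by case: (dec _ _ _); case: (H0 n.+1); rewrite /= ?mul1r ?mul0r; lra.
- have : x + 1 <= g by rewrite le_max ltNge c_le0 lexx orbT.
  by case: (dec _ _ _); case: (H0 n.+1); rewrite /= ?mul1r ?mul0r; lra.
Qed.

Lemma wealth_false_le_budget w n :
  W w n + \sum_(s < n) (H0 s.+1)%:R * (dec a p w s.+1)%:R <=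
  budget w n + \sum_(s < n) (H0 s.+1)%:R *
     ((dec a p w s.+1)%:R * reward_cap s (hist a p w s) - phi s.+1 (hist a p w s)).
Proof.
elim: n => [|n IH]; first by rewrite !big_ord0 /budget /= !addr0.
rewrite !big_ord_recr /=; have := wealth_false_step w n; rewrite /=; lra.
Qed.

Fixpoint wealth_hist (h : seq bool) n : R :=
  match n with
  | 0 => W0
  | n'.+1 => wealth_hist h n' - phi n'.+1 (take n' h)
             + (nth false h n')%:R * psi n'.+1 (take n' h)
  end.

Definition nfalse_hist T (h : seq bool) : R :=
  \sum_(s < T) (H0 s.+1)%:R * (nth false h s)%:R.

Definition fdp_wealth T h := (nfalse_hist T h + wealth_hist h T) / nrej_max1 R h.

Definition null_term s h :=
  ((nth false h s)%:R * reward_cap s (take s h) - phi s.+1 (take s h)) / nrej_max1 R h.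

Lemma wealth_histE w n T : (n <= T)%N -> W w n = wealth_hist (hist a p w T) n.
Proof.
elim: n => [//|n IH] nT /=; rewrite IH ?(ltnW nT) // take_hist ?(ltnW nT) //.
by rewrite decE nth_hist.
Qed.

Lemma nfalse_histE w T : (nfalse a p H0 w T)%:R = nfalse_hist T (hist a p w T).
Proof.
rewrite /nfalse big_add1 /= big_mkord natr_sum /nfalse_hist big_mkcond /=.
apply: eq_bigr => s _; rewrite decE nth_hist //.
by case: (H0 s.+1); rewrite ?mul1r ?mul0r.
Qed.

Lemma fdp_wealthE w T :
  ((nfalse a p H0 w T)%:R + W w T) / (maxn (nrej a p w T) 1)%:R =
  fdp_wealth T (hist a p w T).
Proof. by rewrite nfalse_histE (wealth_histE w (leqnn T)). Qed.

Lemma wealth_ge0 w T : 0 <= W w T.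
Proof.
by case: T => [|T]; [case/andP: W0_0alpha | have [_ [_ []]] := gai w (ltn0Sn T)].
Qed.

Lemma nfalse_hist_ge0 T h : 0 <= nfalse_hist T h.
Proof. by apply: sumr_ge0 => s _; rewrite mulr_ge0. Qed.

Lemma fdp_wealth_ge0 w T : 0 <= fdp_wealth T (hist a p w T).
Proof. by rewrite -fdp_wealthE divr_ge0 ?addr_ge0 ?wealth_ge0. Qed.

Lemma fdp_le_fdp_wealth w T :
  nfalse_hist T (hist a p w T) / nrej_max1 R (hist a p w T) <=
  fdp_wealth T (hist a p w T).
Proof.
rewrite ler_wpM2r ?invr_ge0 ?(ltW (nrej_max1_gt0 _ _)) // lerDl.
by rewrite -(wealth_histE w (leqnn T)) wealth_ge0.
Qed.

Lemma fdp_wealth_le w T :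
  fdp_wealth T (hist a p w T) <=
  alpha + \sum_(s < T | H0 s.+1) null_term s (hist a p w T).
Proof.
have nfalseE : nfalse_hist T (hist a p w T) =
    \sum_(s < T) (H0 s.+1)%:R * (dec a p w s.+1)%:R.
  by apply: eq_bigr => s _; rewrite decE nth_hist.
have termsE : (\sum_(s < T | H0 s.+1) null_term s (hist a p w T)) *
    nrej_max1 R (hist a p w T) = \sum_(s < T) (H0 s.+1)%:R *
    ((dec a p w s.+1)%:R * reward_cap s (hist a p w s) - phi s.+1 (hist a p w s)).
  rewrite big_mkcond mulr_suml; apply: eq_bigr => s _.
  rewrite /null_term take_hist ?(ltnW (ltn_ord s)) // nth_hist // -decE.
  by case: (H0 s.+1); rewrite ?mul1r ?mul0r // divfK ?gt_eqF ?nrej_max1_gt0.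
rewrite /fdp_wealth ler_pdivrMr ?nrej_max1_gt0 // mulrDl termsE nfalseE.
rewrite -(wealth_histE w (leqnn T)) addrC.
apply: le_trans (wealth_false_le_budget w T) _.
by rewrite lerD2r budget_le.
Qed.

Hypothesis mp : forall t, measurable_fun setT (p t).
Hypothesis p01 : forall t w, 0 <= p t w <= 1.
Hypothesis null_unif : forall t, H0 t -> super_uniform P (p t).
Hypothesis null_indep : forall t, H0 t -> indep_from_others P p t.
Hypothesis a_ge0 : forall t h, size h = t.-1 -> 0 <= a t h.
Hypothesis a_mono : forall t h h', size h = t.-1 -> hist_le h h' -> a t h <= a t h'.

Lemma null_term_expect_le0 T s : H0 s.+1 -> (s < T)%N ->
  hist_expect P p a T (null_term s) <= 0.
Proof.
move=> null sT; rewrite (_ : null_term s = fun h =>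
    (nth false h s)%:R * reward_cap s (take s h) / nrej_max1 R h -
    phi s.+1 (take s h) / nrej_max1 R h); last first.
  by apply/funext => h; rewrite /null_term mulrBl.
rewrite hist_expectB subr_le0; apply: le_trans (null_reject_expect_le mp p01
  a_ge0 a_mono (null_unif null) (null_indep null) sT _) _.
  by move=> x; rewrite le_max lexx.
apply: ler_hist_expect => w; rewrite take_hist ?(ltnW sT) //.
by rewrite ler_wpM2r ?invr_ge0 ?(ltW (nrej_max1_gt0 _ _)) ?reward_cap_mul_le.
Qed.

Lemma hist_expect_fdp_wealth_le T :
  hist_expect P p a T (fun h => Num.max (fdp_wealth T h) 0) <= alpha.
Proof.
apply: le_trans (ler_hist_expect P (G := fun h =>
  alpha + \sum_(s < T | H0 s.+1) null_term s h) _) _.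
  by move=> w; rewrite max_l ?fdp_wealth_ge0 ?fdp_wealth_le.
rewrite hist_expectD (hist_expect_cst P mp) (hist_expect_sum P p a T _
  (fun s : 'I_T => H0 s.+1) (fun s : 'I_T => null_term s)) gerDl.
by apply: sumr_le0 => s null; exact: null_term_expect_le0.
Qed.

End gai_plus_plus.

Theorem theorem1 (R : realType) (d : measure_display) (Omega : measurableType d)
  (P : probability Omega R) (p : nat -> Omega -> R) (H0 : pred nat)
  (alpha W0 : R) (alphat phi psi : nat -> seq bool -> R) :
  0 < alpha < 1 -> 0 <= W0 <= alpha ->
  (forall t, measurable_fun setT (p t)) ->
  (forall t w, 0 <= p t w <= 1) ->
  (forall t, H0 t -> super_uniform P (p t)) ->
  (forall t, H0 t -> indep_from_others P p t) ->
  (forall t h, size h = t.-1 -> 0 <= alphat t h) ->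
  (forall t h h', size h = t.-1 -> hist_le h h' -> alphat t h <= alphat t h') ->
  (forall w t, (0 < t)%N ->
     let h := hist alphat p w t.-1 in
     0 <= phi t h /\ phi t h <= wealth alphat phi psi W0 p w t.-1 /\
     0 <= wealth alphat phi psi W0 p w t /\
     psi t h <= phi t h + bt alpha W0 (nrej alphat p w t.-1) /\
     (0 < alphat t h ->
        psi t h <= phi t h / alphat t h + bt alpha W0 (nrej alphat p w t.-1) - 1)) ->
  forall T : nat,
    ('E_P[fun w => (((nfalse alphat p H0 w T)%:R + wealth alphat phi psi W0 p w T)
                   / (maxn (nrej alphat p w T) 1)%:R)%R] <= alpha%:E)%E /\
    ('E_P[fun w => ((nfalse alphat p H0 w T)%:R
                   / (maxn (nrej alphat p w T) 1)%:R)%R] <= alpha%:E)%E.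
Proof.
move=> alpha_01 W0_0alpha mp p01 null_unif null_indep a_ge0 a_mono gai T.
(* [max _ 0] makes F nonnegative also on unreachable histories. *)
pose F h := Num.max (fdp_wealth H0 W0 phi psi T h) 0.
pose G h := nfalse_hist R H0 T h / nrej_max1 R h.
have F_ge0 (h : T.-tuple bool) : 0 <= F h by rewrite le_max lexx orbT.
have G_ge0 (h : T.-tuple bool) : 0 <= G h by rewrite divr_ge0 ?nfalse_hist_ge0.
have F_fdp_wealth w :
    F (hist alphat p w T) = fdp_wealth H0 W0 phi psi T (hist alphat p w T).
  by rewrite /F max_l //; exact: (fdp_wealth_ge0 H0 W0_0alpha gai).
have EF : hist_expect P p alphat T F <= alpha.
  exact: (hist_expect_fdp_wealth_le alpha_01 W0_0alpha gai mp p01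
    null_unif null_indep a_ge0 a_mono).
split.
  rewrite (expectation_histE P mp (a := alphat) F_ge0) ?lee_fin // => w.
  by rewrite F_fdp_wealth fdp_wealthE.
rewrite (expectation_histE P mp (a := alphat) G_ge0) ?lee_fin; last first.
  by move=> w; rewrite nfalse_histE.
apply: le_trans EF; apply: ler_hist_expect => w.
by rewrite F_fdp_wealth (fdp_le_fdp_wealth H0 W0_0alpha gai).
Qed.
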